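(* Let $n\ge 3$, $0<m<\frac{n-2}{n}$, $m\ne\frac{n-2}{n+2}$, $\lambda>0$, $\beta>0$. Let $v$ be the radially symmetric solution described in the context, $w(s)=r^2v(r)^{1-m}$ with $s=\log r$, $h(s)=w(s)-\frac{2(n-1)(n-2-nm)}{(1-m)\beta}s$, $h_1(s)=h(s)+\frac{(n-1)[n-2-(n+2)m]}{(1-m)\beta}\log s$, $K(\lambda,\beta)=\lim_{s\to\infty}h_1(s)$ (a finite limit), \[ h_2(s)=h_1(s)-K(\lambda,\beta)-\frac{(n-1)(n-2-(n+2)m)^2}{2(n-2-nm)(1-m)\beta}\cdot\frac{1+\log s}{s}, \] and \[ a_1(\lambda,\beta)=\frac{2(1-2m)(n-1)(n-2-nm)}{(1-m)^2}+\frac{(n-1)(n-2-(n+2)m)^2}{(1-m)^2}+\frac{n-2-(n+2)m}{1-m}K(\lambda,\beta)\beta . \] Then \[ h_2(s)=-\frac{(1-m)a_1(\lambda,\beta)}{2(n-2-nm)\beta s}+\frac{\varepsilon(s)}{s}\quad\text{as }s\to\infty, \] where $\varepsilon(s)\to0$ as $s\to\infty$.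
   Context: $v=v(r)$, $r=|x|$, is the unique radially symmetric positive classical solution of $\frac{n-1}{m}\Delta v^m+\frac{2\beta}{1-m}v+\beta x\cdot\nabla v=0$ in $\mathbb{R}^n$ with $v(0)=\lambda$. *)

From Stdlib Require Import Reals.
From Coquelicot Require Import Coquelicot.
Open Scope R_scope.

(* Radial profile v : R -> R, only its values on [0, +oo) matter.
   u = v^m (real power, v > 0). The equation
     (n-1)/m Δ(v^m) + 2β/(1-m) v + β x·∇v = 0
   for a radial function reads, for r > 0,
     (n-1)/m (u'' + (n-1)/r u') + 2β/(1-m) v + β r v' = 0.
   Regularity at the origin (classical C^2 radial solution): v(0) = λ,
   v continuous at 0+, and u'(r) -> 0 as r -> 0+. *)
Definition radial_sol (n : nat) (m beta lambda : R) (v : R -> R) : Prop :=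
  let u := fun t => Rpower (v t) m in
  (forall r, 0 <= r -> 0 < v r) /\
  v 0 = lambda /\
  filterlim v (at_right 0) (locally lambda) /\
  (forall r, 0 < r ->
     ex_derive v r /\ ex_derive u r /\ ex_derive (Derive u) r) /\
  filterlim (Derive u) (at_right 0) (locally 0) /\
  (forall r, 0 < r ->
     (INR n - 1) / m * (Derive (Derive u) r + (INR n - 1) / r * Derive u r)
     + 2 * beta / (1 - m) * v r + beta * r * Derive v r = 0).

Definition w_fun (m : R) (v : R -> R) (s : R) : R :=
  exp (2 * s) * Rpower (v (exp s)) (1 - m).

Definition h_fun (n : nat) (m beta : R) (v : R -> R) (s : R) : R :=
  w_fun m v s - 2 * (INR n - 1) * (INR n - 2 - INR n * m) / ((1 - m) * beta) * s.

Definition h1_fun (n : nat) (m beta : R) (v : R -> R) (s : R) : R :=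
  h_fun n m beta v s
  + (INR n - 1) * (INR n - 2 - (INR n + 2) * m) / ((1 - m) * beta) * ln s.

Definition h2_fun (n : nat) (m beta K : R) (v : R -> R) (s : R) : R :=
  h1_fun n m beta v s - K
  - (INR n - 1) * (INR n - 2 - (INR n + 2) * m) ^ 2
      / (2 * (INR n - 2 - INR n * m) * (1 - m) * beta) * ((1 + ln s) / s).

Definition a1 (n : nat) (m beta K : R) : R :=
  2 * (1 - 2 * m) * (INR n - 1) * (INR n - 2 - INR n * m) / (1 - m) ^ 2
  + (INR n - 1) * (INR n - 2 - (INR n + 2) * m) ^ 2 / (1 - m) ^ 2
  + (INR n - 2 - (INR n + 2) * m) / (1 - m) * K * beta.

(* In the variables s = log r, w = r^2 v^(1-m) and z = k w'/w with k = m/(1-m), the radial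
   equation becomes the autonomous system
     w' = w z / k,    z' = alpha + gamma z - z^2 - b w z,
   where b, alpha > 0 because m < (n-2)/n.  Near the origin z is close to 2k > 0; a barrier
   argument then keeps z positive and bounded, which forces w -> +oo.  Each of
   w z,  w (w z - alpha/b)  and  w (w (w z - alpha/b) - e1)  satisfies a linear relaxation
   equation  g' = - (b w + O(1)) (g - l) + O(1)  whose rate b w tends to +oo, so
   w z = alpha/b + e1/w + e2/w^2 + o(w^-2).  Integrating w' = w z / k gives w/s -> c1 and
   w - c1 s = O(log s), hence h1' = O(log s / s^2) and h1 converges to some K.  Finally
   T = h1 - K - c3 (1 + log s)/s + M/s satisfies T -> 0 and s^2 T' -> 0, so s T -> 0. *)

From Stdlib Require Import Reals Lra Classical.
From Coquelicot Require Import Coquelicot.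
Open Scope R_scope.

(** * Comparison principles for derivatives *)

Lemma increment_le (f g df dg : R -> R) (x y : R) :
  x <= y ->
  (forall t, x <= t <= y -> is_derive f t (df t)) ->
  (forall t, x <= t <= y -> is_derive g t (dg t)) ->
  (forall t, x <= t <= y -> df t <= dg t) ->
  f y - f x <= g y - g x.
Proof.
  intros Hxy Hf Hg Hle.
  destruct (Rle_lt_or_eq_dec _ _ Hxy) as [Hlt | <-]; [|lra].
  destruct (MVT_cor2 (fun t => g t - f t) (fun t => dg t - df t) x y Hlt) as [c [Hc Hcxy]].
  { intros t Ht. apply is_derive_Reals, (is_derive_minus g f); auto. }
  assert (0 <= dg c - df c) by (specialize (Hle c); lra).
  nra.
Qed.

Lemma increment_le_linear (f df : R -> R) (c x y : R) :
  x <= y -> (forall t, x <= t <= y -> is_derive f t (df t)) ->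
  (forall t, x <= t <= y -> df t <= c) ->
  f y - f x <= c * (y - x).
Proof.
  intros Hxy Hf Hle.
  replace (c * (y - x)) with (c * y - c * x) by ring.
  apply (increment_le f (fun t => c * t) df (fun _ => c)); auto.
  intros t _. auto_derive; [easy | ring].
Qed.

Lemma increment_ge_linear (f df : R -> R) (c x y : R) :
  x <= y -> (forall t, x <= t <= y -> is_derive f t (df t)) ->
  (forall t, x <= t <= y -> c <= df t) ->
  c * (y - x) <= f y - f x.
Proof.
  intros Hxy Hf Hle.
  enough (- f y - - f x <= - c * (y - x)) by lra.
  apply (increment_le_linear (fun t => - f t) (fun t => - df t)); auto.
  - intros t Ht. apply (is_derive_opp f). auto.
  - intros t Ht. specialize (Hle t Ht). lra.
Qed.

Lemma abs_increment_le (f g df dg : R -> R) (x y : R) :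
  x <= y ->
  (forall t, x <= t <= y -> is_derive f t (df t)) ->
  (forall t, x <= t <= y -> is_derive g t (dg t)) ->
  (forall t, x <= t <= y -> Rabs (df t) <= dg t) ->
  Rabs (f y - f x) <= g y - g x.
Proof.
  intros Hxy Hf Hg Hle.
  assert (Hbetween : forall t, x <= t <= y -> - dg t <= df t <= dg t)
    by (intros t Ht; apply Rabs_le_between, Hle, Ht).
  apply Rabs_le. split.
  - enough (- f y - - f x <= g y - g x) by lra.
    apply (increment_le (fun t => - f t) g (fun t => - df t) dg); auto.
    + intros t Ht. apply (is_derive_opp f). auto.
    + intros t Ht. specialize (Hbetween t Ht). lra.
  - apply (increment_le f g df dg); auto.
    intros t Ht. apply Hbetween, Ht.
Qed.

(** * Barriers *)

Lemma is_derive_locally_close (g : R -> R) (x d eps : R) :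
  is_derive g x d -> 0 < eps ->
  exists del : posreal, forall y, Rabs (y - x) < del -> Rabs (g y - g x) < eps.
Proof.
  intros Hd Heps.
  destruct (ex_derive_continuous g x (ex_intro _ d Hd) (ball (g x) (mkposreal eps Heps)))
    as [del Hdel]; [apply locally_ball|].
  exists del. exact Hdel.
Qed.

Lemma is_derive_neg_left (g : R -> R) (x d : R) :
  is_derive g x d -> d < 0 ->
  exists del : posreal, forall y, x - del < y < x -> g x < g y.
Proof.
  intros Hd Hneg.
  destruct (proj1 (is_derive_Reals g x d) Hd (- d / 2)) as [del Hdel]; [lra|].
  exists del. intros y Hy.
  specialize (Hdel (y - x) ltac:(lra) ltac:(rewrite Rabs_left; lra)).
  replace (x + (y - x)) with y in Hdel by ring.
  apply Rabs_lt_between' in Hdel.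
  assert (Hq : (g y - g x) / (y - x) < 0) by lra.
  assert (g y - g x = (g y - g x) / (y - x) * (y - x)) by (field; lra).
  nra.
Qed.

Lemma first_hitting_time (g dg : R -> R) (a t L : R) :
  (forall s, a <= s -> is_derive g s (dg s)) -> g a < L -> a <= t -> L <= g t ->
  exists tau, a < tau /\ g tau = L /\ forall y, a <= y < tau -> g y < L.
Proof.
  intros Hg Ha Hat Ht.
  set (E := fun x => a <= x <= t /\ forall y, a <= y <= x -> g y < L).
  assert (Ea : E a) by (split; [lra|]; intros y Hy; replace y with a by lra; exact Ha).
  destruct (completeness E) as [tau [Hub Hlub]]; [exists t; intros x Hx; apply Hx | now exists a |].
  assert (Ha_tau : a <= tau) by now apply Hub.
  assert (Htau_t : tau <= t) by (apply Hlub; intros x Hx; apply Hx).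
  assert (Hbelow : forall y, a <= y < tau -> g y < L).
  { intros y Hy. destruct (classic (exists x, E x /\ y <= x)) as [[x [[_ Hx] Hyx]] | Hn].
    - apply Hx. lra.
    - enough (tau <= y) by lra. apply Hlub. intros x Ex.
      apply Rnot_lt_le. intro. apply Hn. exists x. split; [exact Ex | lra]. }
  destruct (Rtotal_order (g tau) L) as [Hlt | [Heq | Hgt]].
  - exfalso.
    destruct (is_derive_locally_close g tau (dg tau) (L - g tau) (Hg tau Ha_tau))
      as [[del Hdel] Hnear];
      [lra|].
    assert (Htau : tau < t) by (destruct (Req_dec tau t); subst; lra).
    set (x := Rmin (tau + del / 2) t).
    assert (Hx : tau < x /\ x <= tau + del / 2 /\ x <= t)
      by (unfold x; split; [apply Rmin_case; lra | split; [apply Rmin_l | apply Rmin_r]]).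
    enough (Ex : E x) by (assert (x <= tau) by (apply Hub; exact Ex); lra).
    split; [lra|]. intros y Hy.
    destruct (Rlt_or_le y tau) as [Hyl | Hyr]; [apply Hbelow; lra|].
    specialize (Hnear y ltac:(simpl; rewrite Rabs_right; lra)).
    apply Rabs_lt_between' in Hnear. lra.
  - exists tau. split; [|split; [exact Heq | exact Hbelow]].
    destruct (Req_dec a tau); subst; lra.
  - exfalso.
    assert (Ha_tau' : a < tau) by (destruct (Req_dec a tau); subst; lra).
    destruct (is_derive_locally_close g tau (dg tau) (g tau - L) (Hg tau Ha_tau))
      as [[del Hdel] Hnear];
      [lra|].
    set (y := Rmax a (tau - del / 2)).
    assert (Hy : a <= y < tau /\ tau - del / 2 <= y)
      by (unfold y; split; [split; [apply Rmax_l | apply Rmax_case; lra] | apply Rmax_r]).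
    specialize (Hnear y ltac:(simpl; rewrite Rabs_left; lra)). apply Rabs_lt_between' in Hnear.
    specialize (Hbelow y (proj1 Hy)). lra.
Qed.

Lemma stays_below (g dg : R -> R) (a L : R) :
  (forall s, a <= s -> is_derive g s (dg s)) -> g a < L ->
  (forall s, a <= s -> g s = L -> dg s < 0) ->
  forall s, a <= s -> g s < L.
Proof.
  intros Hg Ha Hcross t Hat. apply Rnot_le_lt. intro Ht.
  destruct (first_hitting_time g dg a t L Hg Ha Hat Ht) as [tau [Htau [Heq Hbelow]]].
  destruct (is_derive_neg_left g tau (dg tau) (Hg tau ltac:(lra)) (Hcross tau ltac:(lra) Heq))
    as [[del Hdel] Hleft].
  set (y := Rmax a (tau - del / 2)).
  assert (Hy : a <= y < tau /\ tau - del / 2 <= y)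
    by (unfold y; split; [split; [apply Rmax_l | apply Rmax_case; lra] | apply Rmax_r]).
  specialize (Hleft y ltac:(simpl; lra)). specialize (Hbelow y (proj1 Hy)). lra.
Qed.

Lemma eventually_below (g dg : R -> R) (a L eta : R) :
  (forall s, a <= s -> is_derive g s (dg s)) -> 0 < eta ->
  (forall s, a <= s -> L <= g s -> dg s <= - eta) ->
  Rbar_locally p_infty (fun s => g s < L).
Proof.
  intros Hg Heta Hdec.
  destruct (classic (exists s1, a <= s1 /\ g s1 < L)) as [[s1 [Hs1 Hgs1]] | Hn].
  - exists s1. intros s Hs.
    apply (stays_below g dg s1 L); [intros; apply Hg; lra | exact Hgs1 | | lra].
    intros t Ht Heq. specialize (Hdec t ltac:(lra) ltac:(lra)). lra.
  - exfalso.
    assert (Habove : forall s, a <= s -> L <= g s)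
      by (intros s Hs; apply Rnot_lt_le; intro; apply Hn; eauto).
    (* decreasing at rate [eta] from [g a], [g] would drop below [L] after time [T] *)
    set (T := (g a - L) / eta + 1).
    assert (HT : eta * T = g a - L + eta) by (unfold T; field; lra).
    assert (0 <= (g a - L) / eta)
      by (apply Rdiv_le_0_compat; [specialize (Habove a (Rle_refl a)); lra | lra]).
    assert (HT1 : 1 <= T) by (unfold T; lra).
    enough (g (a + T) - g a <= - eta * (a + T - a))
      by (assert (L <= g (a + T)) by (apply Habove; lra); nra).
    apply (increment_le_linear g dg); [lra | intros; apply Hg; lra |].
    intros t Ht. apply Hdec; [lra | apply Habove; lra].
Qed.

(** * Asymptotics at infinity *)

Lemma eventually_on_ray (P : R -> Prop) (a : R) :
  Rbar_locally p_infty P -> exists s1, a < s1 /\ forall s, s1 <= s -> P s.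
Proof.
  intros [M HM]. exists (Rmax a M + 1).
  generalize (Rmax_l a M) (Rmax_r a M). intros.
  split; [lra|]. intros s Hs. apply HM. lra.
Qed.

Definition eventually_bounded (f : R -> R) : Prop :=
  exists D, Rbar_locally p_infty (fun s => Rabs (f s) <= D).

Lemma is_lim_eventually_bounded (f : R -> R) (l : R) :
  is_lim f p_infty l -> eventually_bounded f.
Proof.
  intros Hf. exists (Rabs l + 1).
  apply (filter_imp (fun s => Rabs (f s - l) < 1)).
  - intros s Hs. replace (f s) with (f s - l + l) by ring.
    eapply Rle_trans; [apply Rabs_triang | lra].
  - exact (proj2 (is_lim_spec f p_infty l) Hf (mkposreal 1 Rlt_0_1)).
Qed.

Lemma relaxation (g dg p r : R -> R) (a l : R) :
  (forall s, a <= s -> is_derive g s (dg s)) ->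
  (forall s, a <= s -> dg s = - p s * (g s - l) + r s) ->
  is_lim p p_infty p_infty -> eventually_bounded r ->
  is_lim g p_infty l.
Proof.
  intros Hg Heq Hp [D HD]. apply is_lim_spec. intros [eps Heps]. simpl.
  (* once [p eps > |D| + 1], the restoring term beats the forcing outside [l +- eps] *)
  assert (Hfar : Rbar_locally p_infty (fun s => (Rabs D + 1) / eps < p s /\ Rabs (r s) <= D))
    by (apply filter_and; [exact (proj2 (is_lim_spec p p_infty p_infty) Hp _) | exact HD]).
  destruct (eventually_on_ray _ a Hfar) as [a' [Ha' Hfar']].
  assert (Hrate : forall s, a' <= s ->
                   a <= s /\ Rabs D + 1 < p s * eps /\ - Rabs D <= r s <= Rabs D).
  { intros s Hs. destruct (Hfar' s Hs) as [Hps Hr].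
    apply (Rmult_lt_compat_r eps) in Hps; [|exact Heps].
    replace ((Rabs D + 1) / eps * eps) with (Rabs D + 1) in Hps by (field; lra).
    apply Rabs_le_between in Hr. generalize (Rle_abs D). lra. }
  assert (Hp_pos : forall s, a' <= s -> 0 < p s).
  { intros s Hs. destruct (Hrate s Hs) as [_ [Hps _]]. generalize (Rabs_pos D). nra. }
  assert (Hup : Rbar_locally p_infty (fun s => g s < l + eps)).
  { apply (eventually_below g dg a' (l + eps) 1); [intros; apply Hg, Hrate; auto | lra|].
    intros s Hs Hgs. destruct (Hrate s Hs) as [Has [Hps Hr]]. specialize (Hp_pos s Hs).
    rewrite Heq by exact Has. nra. }
  assert (Hlow : Rbar_locally p_infty (fun s => - g s < - (l - eps))).
  { apply (eventually_below (fun s => - g s) (fun s => - dg s) a' (- (l - eps)) 1); [| lra |].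
    - intros s Hs. apply (is_derive_opp g). apply Hg, Hrate, Hs.
    - intros s Hs Hgs. destruct (Hrate s Hs) as [Has [Hps Hr]]. specialize (Hp_pos s Hs).
      rewrite Heq by exact Has. nra. }
  destruct (filter_and _ _ Hup Hlow) as [M HM]. exists M.
  intros s Hs. destruct (HM s Hs). apply Rabs_lt_between'. lra.
Qed.

Lemma is_lim_div_id_of_derive (g dg : R -> R) (a L : R) :
  (forall s, a <= s -> is_derive g s (dg s)) -> is_lim dg p_infty L ->
  is_lim (fun s => g s / s) p_infty L.
Proof.
  intros Hg HdL. apply is_lim_spec. intros [eps Heps]. simpl.
  destruct (eventually_on_ray _ (Rmax 1 a)
              (proj2 (is_lim_spec dg p_infty L) HdL (mkposreal (eps / 2) ltac:(lra))))
    as [s1 [Hs1 Hnear]].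
  cbn [pos] in Hnear. apply Rmax_Rlt in Hs1 as [Hs1 Has1].
  set (C := Rabs (g s1 - L * s1)).
  exists (Rmax s1 (2 * C / eps)). intros s Hs. apply Rmax_Rlt in Hs as [Hs Hs'].
  assert (Hinc : Rabs ((g s - L * s) - (g s1 - L * s1)) <= eps / 2 * s - eps / 2 * s1).
  { apply (abs_increment_le (fun t => g t - L * t) (fun t => eps / 2 * t)
                            (fun t => dg t - L) (fun _ => eps / 2)); [lra | | |].
    - intros t Ht. apply (is_derive_minus g (fun t => L * t)); [apply Hg; lra|].
      auto_derive; [easy | ring].
    - intros t Ht. auto_derive; [easy | ring].
    - intros t Ht. left. apply Hnear. lra. }
  assert (HC : 2 * C < eps * s).
  { apply (Rmult_lt_compat_l eps) in Hs'; [|lra].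
    replace (eps * (2 * C / eps)) with (2 * C) in Hs' by (field; lra). exact Hs'. }
  replace (g s / s - L) with ((g s - L * s) / s) by (field; lra).
  rewrite Rabs_div, (Rabs_right s) by lra.
  apply Rlt_div_l; [lra|].
  generalize (Rabs_triang_inv (g s - L * s) (g s1 - L * s1)). fold C.
  assert (0 < eps / 2 * s1) by (apply Rmult_lt_0_compat; lra). nra.
Qed.

Lemma is_lim_mult_id_of_derive (T dT : R -> R) (a : R) :
  (forall s, a <= s -> is_derive T s (dT s)) -> is_lim T p_infty 0 ->
  is_lim (fun s => s ^ 2 * dT s) p_infty 0 -> is_lim (fun s => s * T s) p_infty 0.
Proof.
  intros HT HT0 Hd. apply is_lim_spec. intros [eps Heps]. simpl.
  destruct (eventually_on_ray _ (Rmax 1 a)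
              (proj2 (is_lim_spec _ p_infty 0) Hd (mkposreal (eps / 2) ltac:(lra))))
    as [s1 [Hs1 Hnear]].
  cbn [pos] in Hnear. apply Rmax_Rlt in Hs1 as [Hs1 Has1].
  exists s1. intros s Hs.
  (* [|T'| <= (eps/2) / t^2] integrates to [|T y - T s| <= (eps/2) / s] for [y >= s] *)
  assert (Hinc : forall y, s <= y -> Rabs (T y - T s) <= eps / 2 / s).
  { intros y Hy. eapply Rle_trans.
    - apply (abs_increment_le T (fun t => - (eps / 2) / t) dT (fun t => eps / 2 / t ^ 2));
        [lra | | |].
      + intros t Ht. apply HT. lra.
      + intros t Ht. auto_derive; [lra | field; lra].
      + intros t Ht. specialize (Hnear t ltac:(lra)).
        rewrite Rminus_0_r, Rabs_mult, (Rabs_right (t ^ 2)) in Hnear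
          by (apply Rle_ge, pow2_ge_0).
        apply Rle_div_r; [apply pow_lt; lra|]. lra.
    - assert (0 < eps / 2 / y) by (apply Rdiv_lt_0_compat; lra). lra. }
  assert (Habs : Rabs (T s) <= eps / 2 / s).
  { apply Rnot_lt_le. intro Hlt.
    destruct (eventually_on_ray _ s (proj2 (is_lim_spec T p_infty 0) HT0
                                        (mkposreal _ (proj2 (Rlt_0_minus _ _) Hlt))))
      as [y [Hy HTy]].
    specialize (HTy y (Rle_refl y)). cbn [pos] in HTy. rewrite Rminus_0_r in HTy.
    specialize (Hinc y ltac:(lra)). rewrite Rabs_minus_sym in Hinc.
    generalize (Rabs_triang_inv (T s) (T y)). lra. }
  rewrite Rminus_0_r, Rabs_mult, (Rabs_right s) by lra.
  apply Rle_lt_trans with (s * (eps / 2 / s)); [apply Rmult_le_compat_l; lra|].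
  replace (s * (eps / 2 / s)) with (eps / 2) by (field; lra). lra.
Qed.

Lemma ex_lim_of_derive_dominated (f df psi dpsi : R -> R) (a : R) :
  (forall s, a <= s -> is_derive f s (df s)) ->
  (forall s, a <= s -> is_derive psi s (dpsi s)) ->
  (forall s, a <= s -> Rabs (df s) <= - dpsi s) ->
  is_lim psi p_infty 0 -> exists K : R, is_lim f p_infty K.
Proof.
  intros Hf Hpsi Hdom Hpsi0.
  destruct (proj1 (filterlim_locally_cauchy (F := Rbar_locally p_infty) f)) as [K HK];
    [| now exists K].
  intros [eps Heps].
  destruct (eventually_on_ray _ a
              (proj2 (is_lim_spec psi p_infty 0) Hpsi0 (mkposreal (eps / 2) ltac:(lra))))
    as [s1 [Has1 Hnear]].
  cbn [pos] in Hnear.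
  assert (Hcauchy : forall u v, s1 <= u -> u <= v -> Rabs (f v - f u) < eps).
  { intros u v Hu Huv. eapply Rle_lt_trans.
    - apply (abs_increment_le f (fun t => - psi t) df (fun t => - dpsi t)); [lra | | |].
      + intros t Ht. apply Hf. lra.
      + intros t Ht. apply (is_derive_opp psi). apply Hpsi. lra.
      + intros t Ht. apply Hdom. lra.
    - assert (Hpu := Hnear u Hu). assert (Hpv := Hnear v ltac:(lra)).
      rewrite Rminus_0_r in Hpu, Hpv.
      apply Rabs_lt_between in Hpu. apply Rabs_lt_between in Hpv. lra. }
  exists (fun s => s1 <= s). split; [exists s1; intros; lra|].
  intros u v Hu Hv. change (Rabs (f v - f u) < eps).
  destruct (Rle_or_lt u v) as [Huv | Hvu]; [now apply Hcauchy|].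
  rewrite Rabs_minus_sym. apply Hcauchy; lra.
Qed.

Lemma is_lim_mult_finite (f g : R -> R) (lf lg : R) :
  is_lim f p_infty lf -> is_lim g p_infty lg ->
  is_lim (fun s => f s * g s) p_infty (lf * lg).
Proof. intros Hf Hg. exact (is_lim_mult f g p_infty lf lg Hf Hg I). Qed.

Lemma is_lim_inv_id_p : is_lim (fun s => / s) p_infty 0.
Proof. exact (is_lim_inv (fun s => s) p_infty p_infty (is_lim_id _) ltac:(discriminate)). Qed.

Lemma is_lim_div_ln_sqr_p : is_lim (fun y => ln y ^ 2 / y) p_infty 0.
Proof.
  assert (Hsqrt : is_lim (fun y => ln (sqrt y) / sqrt y) p_infty 0).
  { apply (is_lim_comp (fun y => ln y / y) sqrt p_infty 0 p_infty).
    - apply is_lim_div_ln_p.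
    - apply (is_lim_sqrt_p (fun y => y)), is_lim_id.
    - now exists 0. }
  apply (is_lim_ext_loc (fun y => 4 * ((ln (sqrt y) / sqrt y) * (ln (sqrt y) / sqrt y)))).
  - exists 0. intros y Hy.
    assert (Hq : 0 < sqrt y) by (apply sqrt_lt_R0; lra).
    assert (Hy2 : y = sqrt y * sqrt y) by (rewrite sqrt_sqrt; lra).
    assert (Hln : ln y = 2 * ln (sqrt y)) by (rewrite Hy2 at 1; rewrite ln_mult by exact Hq; ring).
    rewrite Hln. set (q := sqrt y) in *. rewrite Hy2. field. lra.
  - replace 0 with (4 * (0 * 0)) by ring.
    apply is_lim_mult_finite; [apply is_lim_const | apply is_lim_mult_finite; exact Hsqrt].
Qed.

(** * The autonomous system for [(w, z)] *)

Section AutonomousSystem.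

Variables (k b alpha gamma s0 : R) (W Z : R -> R).
Hypothesis k_pos : 0 < k.
Hypothesis b_pos : 0 < b.
Hypothesis alpha_pos : 0 < alpha.
Hypothesis W_pos : forall s, 0 < W s.
Hypothesis W_derive : forall s, is_derive W s (W s * Z s / k).
Hypothesis Z_derive :
  forall s, is_derive Z s (alpha + gamma * Z s - Z s ^ 2 - b * W s * Z s).
Hypothesis Z_s0_pos : 0 < Z s0.

Let dZ (s : R) : R := alpha + gamma * Z s - Z s ^ 2 - b * W s * Z s.

Lemma Z_pos (s : R) : s0 <= s -> 0 < Z s.
Proof.
  intros Hs. enough (- Z s < 0) by lra.
  apply (stays_below (fun t => - Z t) (fun t => - dZ t) s0);
    [intros t _; apply (is_derive_opp Z), Z_derive | lra | | exact Hs].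
  intros t _ Ht. unfold dZ. replace (Z t) with 0 by lra. lra.
Qed.

Lemma Z_bounded : exists Zmax, forall s, s0 <= s -> Z s < Zmax.
Proof.
  set (L := Rmax (Z s0 + 1) (Rabs gamma + alpha + 1)).
  assert (HL : Z s0 < L /\ Rabs gamma + alpha + 1 <= L)
    by (unfold L; split;
        [generalize (Rmax_l (Z s0 + 1) (Rabs gamma + alpha + 1)) | apply Rmax_r]; lra).
  exists L. intros s Hs.
  apply (stays_below Z dZ s0 L); [intros t _; apply Z_derive | lra | | exact Hs].
  intros t Ht HZt. unfold dZ. rewrite HZt.
  assert (0 <= b * W t * L)
    by (apply Rmult_le_pos; [apply Rmult_le_pos|]; generalize (W_pos t) (Rabs_pos gamma); lra).
  assert (gamma * L <= Rabs gamma * L)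
    by (apply Rmult_le_compat_r; [generalize (Rabs_pos gamma); lra | apply Rle_abs]).
  generalize (Rabs_pos gamma). nra.
Qed.

Lemma W_nondecreasing (x y : R) : s0 <= x -> x <= y -> W x <= W y.
Proof.
  intros Hx Hxy.
  enough (0 * (y - x) <= W y - W x) by lra.
  apply (increment_ge_linear W (fun t => W t * Z t / k)); [exact Hxy | intros; apply W_derive |].
  intros t Ht. apply Rdiv_le_0_compat; [|lra].
  apply Rmult_le_pos; left; [apply W_pos | apply Z_pos; lra].
Qed.

(* For small [Z] the source term [alpha] dominates [dZ]. *)
Lemma Z_eventually_ge_of_W_bounded (B : R) :
  (forall s, s0 <= s -> W s <= B) ->
  exists del, 0 < del /\ Rbar_locally p_infty (fun s => del < Z s).
Proof.
  intros HB.
  assert (HB0 : 0 < B) by (generalize (HB s0 (Rle_refl s0)) (W_pos s0); lra).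
  set (C := Rabs gamma + 1 + b * B).
  assert (HC : 0 < C) by (unfold C; generalize (Rabs_pos gamma); nra).
  set (del := Rmin 1 (alpha / (2 * C))).
  assert (Hdel : 0 < del /\ del <= 1 /\ del * C <= alpha / 2).
  { assert (alpha / (2 * C) * C = alpha / 2) by (field; lra).
    assert (0 < alpha / (2 * C)) by (apply Rdiv_lt_0_compat; lra).
    generalize (Rmin_l 1 (alpha / (2 * C))) (Rmin_r 1 (alpha / (2 * C))). unfold del.
    split; [apply Rmin_case; lra | split; [lra | nra]]. }
  exists del. split; [lra|].
  apply (filter_imp (fun s => - Z s < - del)); [intros; lra|].
  apply (eventually_below (fun s => - Z s) (fun s => - dZ s) s0 (- del) (alpha / 2));
    [intros; apply (is_derive_opp Z), Z_derive | lra |].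
  intros s Hs HZs. assert (HZ := Z_pos s Hs). generalize (HB s Hs) (W_pos s). intros HWs HWs0.
  assert (gamma * Z s >= - Rabs gamma * del).
  { assert (Rabs (gamma * Z s) <= Rabs gamma * del)
      by (rewrite Rabs_mult, (Rabs_right (Z s)) by lra;
          apply Rmult_le_compat_l; [apply Rabs_pos | lra]).
    generalize (Rle_abs (- (gamma * Z s))). rewrite Rabs_Ropp. lra. }
  assert (b * W s * Z s <= b * B * del).
  { assert (b * W s <= b * B) by nra. assert (0 <= b * W s) by nra. nra. }
  unfold dZ, C in *. nra.
Qed.

(* Were [W] bounded, [Z] would stay above some [del > 0], and [W' >= W s0 * del / k] would
   make [W] grow linearly. *)
Lemma W_to_p_infty : is_lim W p_infty p_infty.
Proof.
  apply is_lim_spec. intros B. apply NNPP. intros Hn.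
  assert (HB : forall s, s0 <= s -> W s <= B).
  { intros s Hs. apply Rnot_lt_le. intro HBs. apply Hn. exists s. intros t Ht.
    apply (Rlt_le_trans _ (W s)); [exact HBs | apply W_nondecreasing; lra]. }
  destruct (Z_eventually_ge_of_W_bounded B HB) as [del [Hdel HZ]].
  destruct (eventually_on_ray _ s0 HZ) as [s2 [Hs2 HZ']].
  set (c := W s0 * del / k).
  assert (Hc : 0 < c) by (unfold c; generalize (W_pos s0); intros; apply Rdiv_lt_0_compat; nra).
  assert (HB1 : 0 < B + 1) by (generalize (HB s0 (Rle_refl s0)) (W_pos s0); lra).
  set (t := s2 + (B + 1) / c).
  assert (Ht : c * (t - s2) = B + 1) by (unfold t; field; lra).
  assert (Hts2 : s2 <= t)
    by (unfold t; assert (0 < (B + 1) / c) by (apply Rdiv_lt_0_compat; lra); lra).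
  enough (c * (t - s2) <= W t - W s2) by (generalize (HB t ltac:(lra)) (W_pos s2); lra).
  apply (increment_ge_linear W (fun t => W t * Z t / k)); [exact Hts2 | intros; apply W_derive |].
  intros x Hx. unfold c. apply Rmult_le_compat_r; [left; apply Rinv_0_lt_compat; lra|].
  apply Rmult_le_compat;
    [left; apply W_pos | lra | apply W_nondecreasing; lra | left; apply HZ'; lra].
Qed.

Lemma bW_minus_bounded_to_p_infty (q : R -> R) (C : R) :
  (forall s, s0 <= s -> q s <= C) -> is_lim (fun s => b * W s - q s) p_infty p_infty.
Proof.
  intros Hq. apply is_lim_spec. intros M.
  destruct (eventually_on_ray _ s0
              (proj2 (is_lim_spec W p_infty p_infty) W_to_p_infty ((M + C) / b)))
    as [s1 [Hs1 HW]].
  exists s1. intros s Hs. specialize (HW s ltac:(lra)). specialize (Hq s ltac:(lra)).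
  apply (Rmult_lt_compat_l b) in HW; [|exact b_pos].
  replace (b * ((M + C) / b)) with (M + C) in HW by (field; lra). lra.
Qed.

Lemma is_derive_W_mult_minus (Y dY : R -> R) (l s : R) :
  is_derive Y s (dY s) ->
  is_derive (fun t => W t * (Y t - l)) s (W s * Z s / k * (Y s - l) + W s * dY s).
Proof.
  intros HY. auto_derive.
  - split; [exists (W s * Z s / k); apply W_derive | split; [exists (dY s); exact HY | easy]].
  - change (Derive (fun x => W x)) with (Derive W). change (Derive (fun x => Y x)) with (Derive Y).
    rewrite (is_derive_unique W s _ (W_derive s)), (is_derive_unique Y s _ HY). ring.
Qed.

Let dWZ (s : R) : R := W s * Z s / k * Z s + W s * dZ s.

Lemma is_derive_WZ (s : R) : is_derive (fun t => W t * Z t) s (dWZ s).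
Proof.
  apply (is_derive_ext (fun t => W t * (Z t - 0))); [intros t; now rewrite Rminus_0_r|].
  unfold dWZ. replace (Z s) with (Z s - 0) at 2 by ring.
  apply (is_derive_W_mult_minus Z dZ), Z_derive.
Qed.

(* [W Z = alpha / b + WZ_coef1 / W + WZ_coef2 / W ^ 2 + o(W ^ -2)] *)
Definition WZ_coef1 : R := gamma * alpha / b ^ 2.
Definition WZ_coef2 : R := (gamma ^ 2 * alpha + (1 / k - 1) * alpha ^ 2) / b ^ 3.
Definition WZ_error1 (s : R) : R := W s * (W s * Z s - alpha / b).
Definition WZ_error2 (s : R) : R := W s * (WZ_error1 s - WZ_coef1).

Let dWZ_error1 (s : R) : R := W s * Z s / k * (W s * Z s - alpha / b) + W s * dWZ s.

Lemma is_derive_WZ_error1 (s : R) : is_derive WZ_error1 s (dWZ_error1 s).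
Proof. exact (is_derive_W_mult_minus (fun t => W t * Z t) dWZ (alpha / b) s (is_derive_WZ s)). Qed.

Lemma WZ_limit : is_lim (fun s => W s * Z s) p_infty (alpha / b).
Proof.
  destruct Z_bounded as [Zmax HZmax].
  set (cc := 1 / k - 1).
  set (D := Rabs gamma + Rabs cc * Zmax).
  assert (Hbound : forall s, s0 <= s -> Rabs (gamma + cc * Z s) <= D).
  { intros s Hs. assert (HZ := Z_pos s Hs). specialize (HZmax s Hs).
    eapply Rle_trans; [apply Rabs_triang|]. rewrite Rabs_mult, (Rabs_right (Z s)) by lra.
    unfold D. generalize (Rabs_pos cc). nra. }
  apply (relaxation (fun s => W s * Z s) dWZ (fun s => b * W s - (gamma + cc * Z s))
           (fun s => (gamma + cc * Z s) * (alpha / b)) s0); [intros; apply is_derive_WZ | | |].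
  - intros s _. unfold dWZ, dZ, cc. field. lra.
  - apply (bW_minus_bounded_to_p_infty _ D).
    intros s Hs. generalize (Rle_abs (gamma + cc * Z s)) (Hbound s Hs). lra.
  - exists (D * (alpha / b)). exists s0. intros s Hs.
    rewrite Rabs_mult, (Rabs_right (alpha / b)) by (left; apply Rdiv_lt_0_compat; lra).
    apply Rmult_le_compat_r; [left; apply Rdiv_lt_0_compat; lra | apply Hbound; lra].
Qed.

Lemma WZ_error1_limit : is_lim WZ_error1 p_infty WZ_coef1.
Proof.
  set (cc := 1 / k - 1).
  apply (relaxation WZ_error1 dWZ_error1 (fun s => b * W s - gamma)
           (fun s => gamma * WZ_coef1 + cc * (W s * Z s * (W s * Z s))
                     + W s * Z s * (W s * Z s - alpha / b) * / k) s0);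
    [intros; apply is_derive_WZ_error1 | | |].
  - intros s _. unfold dWZ_error1, dWZ, dZ, WZ_error1, WZ_coef1, cc. field. lra.
  - apply (bW_minus_bounded_to_p_infty _ gamma). intros; lra.
  - assert (HWZ := WZ_limit). eapply is_lim_eventually_bounded.
    apply is_lim_plus'; [apply is_lim_plus'|].
    + apply is_lim_const.
    + apply is_lim_mult_finite; [apply is_lim_const | apply is_lim_mult_finite; exact HWZ].
    + apply is_lim_mult_finite; [apply is_lim_mult_finite|apply is_lim_const]; [exact HWZ|].
      apply is_lim_minus'; [exact HWZ | apply is_lim_const].
Qed.

Lemma WZ_error2_limit : is_lim WZ_error2 p_infty WZ_coef2.
Proof.
  set (cc := 1 / k - 1).
  apply (relaxation WZ_error2
           (fun s => W s * Z s / k * (WZ_error1 s - WZ_coef1) + W s * dWZ_error1 s)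
           (fun s => b * W s - gamma)
           (fun s => gamma * WZ_coef2 + W s * Z s * / k * (WZ_error1 s - WZ_coef1)
                     + cc * WZ_error1 s * (W s * Z s + alpha / b)
                     + W s * Z s * WZ_error1 s * / k) s0);
    [intros; apply (is_derive_W_mult_minus WZ_error1 dWZ_error1), is_derive_WZ_error1 | | |].
  - intros s _. unfold dWZ_error1, dWZ, dZ, WZ_error2, WZ_error1, WZ_coef2, WZ_coef1, cc.
    field. lra.
  - apply (bW_minus_bounded_to_p_infty _ gamma). intros; lra.
  - assert (HWZ := WZ_limit). assert (HE := WZ_error1_limit). eapply is_lim_eventually_bounded.
    apply is_lim_plus'; [apply is_lim_plus'; [apply is_lim_plus'|]|].
    + apply is_lim_const.
    + apply is_lim_mult_finite; [apply is_lim_mult_finite; [exact HWZ | apply is_lim_const]|].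
      apply is_lim_minus'; [exact HE | apply is_lim_const].
    + apply is_lim_mult_finite; [apply is_lim_mult_finite; [apply is_lim_const | exact HE]|].
      apply is_lim_plus'; [exact HWZ | apply is_lim_const].
    + apply is_lim_mult_finite; [|apply is_lim_const].
      apply is_lim_mult_finite; [exact HWZ | exact HE].
Qed.

Definition W_slope : R := alpha / (b * k).
Definition log_coef : R := - gamma / b.

Lemma W_slope_pos : 0 < W_slope.
Proof. apply Rdiv_lt_0_compat; [lra | now apply Rmult_lt_0_compat]. Qed.

Lemma W_div_id_limit : is_lim (fun s => W s / s) p_infty W_slope.
Proof.
  apply (is_lim_div_id_of_derive W (fun s => W s * Z s / k) 0); [intros; apply W_derive|].
  replace W_slope with (alpha / b * / k) by (unfold W_slope; field; lra).
  apply (is_lim_mult_finite (fun s => W s * Z s) (fun _ => / k));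
    [apply WZ_limit | apply is_lim_const].
Qed.

Lemma id_div_W_limit : is_lim (fun s => s / W s) p_infty (/ W_slope).
Proof.
  apply (is_lim_ext_loc (fun s => / (W s / s))).
  - exists 0. intros s Hs. field. split; [apply Rgt_not_eq, W_pos | lra].
  - exact (is_lim_inv _ p_infty W_slope W_div_id_limit
             (fun H => Rgt_not_eq _ _ W_slope_pos (proj1 (Rbar_finite_eq _ _) H))).
Qed.

Definition h1 (s : R) : R := W s - W_slope * s + log_coef * ln s.
Let dh1 (s : R) : R := W s * Z s / k - W_slope + log_coef / s.

Lemma is_derive_h1 (s : R) : 0 < s -> is_derive h1 s (dh1 s).
Proof.
  intros Hs. unfold h1. auto_derive; [split; [exists (W s * Z s / k); apply W_derive | lra]|].
  change (Derive (fun x => W x)) with (Derive W). rewrite (is_derive_unique W s _ (W_derive s)).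
  unfold dh1. field. lra.
Qed.

Lemma sqr_mul_dh1 (s : R) : 0 < s ->
  s ^ 2 * dh1 s = log_coef * (W s - W_slope * s) * (s / W s) + (s / W s) ^ 2 * WZ_error2 s / k.
Proof.
  intros Hs. generalize (W_pos s). intros HW.
  unfold dh1, WZ_error2, WZ_error1, WZ_coef1, W_slope, log_coef. field. repeat split; lra.
Qed.

Lemma W_linear_deviation_log_bound :
  exists s1 C A, 1 <= s1 /\ 0 <= C /\ 0 <= A /\
    forall s, s1 <= s -> Rabs (W s - W_slope * s) <= C + A * ln s.
Proof.
  assert (Hlim : is_lim (fun s => s * (W s * Z s / k - W_slope)) p_infty
                   (/ W_slope * WZ_coef1 * / k)).
  { apply (is_lim_ext_loc (fun s => s / W s * WZ_error1 s * / k)).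
    - exists 0. intros s Hs. generalize (W_pos s). intros.
      unfold WZ_error1, W_slope. field. repeat split; lra.
    - apply is_lim_mult_finite; [apply is_lim_mult_finite|apply is_lim_const];
        [apply id_div_W_limit | apply WZ_error1_limit]. }
  destruct (is_lim_eventually_bounded _ _ Hlim) as [A HA].
  destruct (eventually_on_ray _ 1 HA) as [s1 [Hs1 HA']].
  assert (HA0 : 0 <= A)
    by (generalize (HA' s1 (Rle_refl s1)) (Rabs_pos (s1 * (W s1 * Z s1 / k - W_slope))); lra).
  exists s1, (Rabs (W s1 - W_slope * s1)), A.
  split; [lra | split; [apply Rabs_pos | split; [exact HA0|]]].
  intros s Hs.
  assert (Hinc : Rabs ((W s - W_slope * s) - (W s1 - W_slope * s1)) <= A * ln s - A * ln s1).
  { apply (abs_increment_le (fun t => W t - W_slope * t) (fun t => A * ln t)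
                            (fun t => W t * Z t / k - W_slope) (fun t => A / t)); [exact Hs | | |].
    - intros t Ht. apply (is_derive_minus W (fun t => W_slope * t)); [apply W_derive|].
      auto_derive; [easy | ring].
    - intros t Ht. auto_derive; [lra | field; lra].
    - intros t Ht. specialize (HA' t ltac:(lra)).
      rewrite Rabs_mult, (Rabs_right t) in HA' by lra.
      apply Rle_div_r; [lra|]. rewrite Rmult_comm. exact HA'. }
  assert (0 <= A * ln s1) by (apply Rmult_le_pos; [exact HA0 | rewrite <- ln_1; apply ln_le; lra]).
  generalize (Rabs_triang_inv (W s - W_slope * s) (W s1 - W_slope * s1)). lra.
Qed.

Lemma sqr_mul_dh1_bound :
  exists s3 C, 1 <= s3 /\ 0 <= C /\ forall s, s3 <= s -> Rabs (s ^ 2 * dh1 s) <= C * (1 + ln s).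
Proof.
  destruct W_linear_deviation_log_bound as [s1 [C0 [A [Hs1 [HC0 [HA Hdev]]]]]].
  destruct (is_lim_eventually_bounded _ _ id_div_W_limit) as [D1 HD1].
  destruct (is_lim_eventually_bounded _ _ WZ_error2_limit) as [D2 HD2].
  destruct (eventually_on_ray _ s1 (filter_and _ _ HD1 HD2)) as [s3 [Hs3 HD]].
  assert (HD0 : 0 <= D1 /\ 0 <= D2).
  { destruct (HD s3 (Rle_refl s3)) as [H1 H2].
    generalize (Rabs_pos (s3 / W s3)) (Rabs_pos (WZ_error2 s3)). lra. }
  assert (Hk : 0 < / k) by (apply Rinv_0_lt_compat; lra).
  exists s3, (Rabs log_coef * D1 * (C0 + A) + D1 ^ 2 * D2 * / k).
  split; [lra|]. generalize (Rabs_pos log_coef) (pow2_ge_0 D1). intros Hc HD1sq.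
  assert (0 <= Rabs log_coef * D1 * (C0 + A)) by (repeat apply Rmult_le_pos; lra).
  assert (0 <= D1 ^ 2 * D2 * / k) by (repeat apply Rmult_le_pos; lra).
  split; [lra|]. intros s Hs.
  assert (Hln : 0 <= ln s) by (rewrite <- ln_1; apply ln_le; lra).
  specialize (Hdev s ltac:(lra)). destruct (HD s Hs) as [HD1s HD2s].
  rewrite sqr_mul_dh1 by lra.
  set (q := s / W s) in *. set (e := WZ_error2 s) in *. set (dev := W s - W_slope * s) in *.
  unfold Rdiv. eapply Rle_trans; [apply Rabs_triang|].
  rewrite !Rabs_mult, <- RPow_abs, (Rabs_right (/ k)) by lra.
  assert (Hdev' : Rabs dev <= (C0 + A) * (1 + ln s)) by nra.
  assert (Hq2 : Rabs q ^ 2 <= D1 ^ 2) by (apply pow_incr; split; [apply Rabs_pos | lra]).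
  assert (Rabs log_coef * Rabs dev * Rabs q <= Rabs log_coef * ((C0 + A) * (1 + ln s)) * D1).
  { apply Rmult_le_compat; [| apply Rabs_pos | | lra].
    - apply Rmult_le_pos; apply Rabs_pos.
    - apply Rmult_le_compat_l; [apply Rabs_pos | exact Hdev']. }
  assert (Rabs q ^ 2 * Rabs e * / k <= D1 ^ 2 * D2 * / k).
  { apply Rmult_le_compat_r; [lra|].
    apply Rmult_le_compat; [apply pow2_ge_0 | apply Rabs_pos | exact Hq2 | lra]. }
  nra.
Qed.

Lemma h1_converges : exists K : R, is_lim h1 p_infty K.
Proof.
  destruct sqr_mul_dh1_bound as [s3 [C [Hs3 [HC Hbound]]]].
  apply (ex_lim_of_derive_dominated h1 dh1 (fun s => C * ((2 + ln s) / s))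
           (fun s => - (C * ((1 + ln s) / s ^ 2))) s3).
  - intros s Hs. apply is_derive_h1. lra.
  - intros s Hs. auto_derive; [lra | field; lra].
  - intros s Hs. specialize (Hbound s Hs).
    assert (Hsq : 0 < s ^ 2) by (apply pow_lt; lra).
    rewrite Rabs_mult, (Rabs_right (s ^ 2)) in Hbound by lra.
    rewrite Ropp_involutive. apply (Rmult_le_reg_l (s ^ 2)); [exact Hsq|].
    replace (s ^ 2 * (C * ((1 + ln s) / s ^ 2))) with (C * (1 + ln s)) by (field; lra).
    exact Hbound.
  - apply (is_lim_ext_loc (fun s => C * (2 * / s + ln s / s)));
      [exists 0; intros s Hs; field; lra|].
    replace 0 with (C * (2 * 0 + 0)) by ring.
    apply is_lim_mult_finite; [apply is_lim_const|].
    apply is_lim_plus'; [apply is_lim_mult_finite; [apply is_lim_const | apply is_lim_inv_id_p]|].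
    apply is_lim_div_ln_p.
Qed.

Lemma sqr_mul_dh1_limit (K : R) :
  is_lim h1 p_infty K ->
  is_lim (fun s => s ^ 2 * dh1 s + log_coef ^ 2 / W_slope * ln s) p_infty
    (log_coef / W_slope * K + WZ_coef2 / (k * W_slope ^ 2)).
Proof.
  intros HK. assert (Hslope := W_slope_pos).
  (* by [sqr_mul_dh1], with [W - W_slope s = h1 - log_coef ln s] *)
  apply (is_lim_ext_loc (fun s => log_coef * h1 s * (s / W s)
                                  + (s / W s) * (s / W s) * WZ_error2 s * / k
                                  + log_coef ^ 2 / W_slope * (h1 s * (ln s / s) * (s / W s)
                                                  - log_coef * (ln s ^ 2 / s) * (s / W s)))).
  { exists 0. intros s Hs. generalize (W_pos s). intros HW.
    rewrite sqr_mul_dh1 by exact Hs. unfold h1. field. repeat split; lra. }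
  replace (log_coef / W_slope * K + WZ_coef2 / (k * W_slope ^ 2))
    with (log_coef * K * / W_slope + / W_slope * / W_slope * WZ_coef2 * / k
          + log_coef ^ 2 / W_slope * (K * 0 * / W_slope - log_coef * 0 * / W_slope))
    by (field; lra).
  assert (Hq := id_div_W_limit). assert (HG := WZ_error2_limit).
  apply is_lim_plus'; [apply is_lim_plus'|].
  - apply is_lim_mult_finite; [|exact Hq].
    apply is_lim_mult_finite; [apply is_lim_const | exact HK].
  - apply is_lim_mult_finite; [|apply is_lim_const].
    apply is_lim_mult_finite; [apply is_lim_mult_finite|]; [exact Hq | exact Hq | exact HG].
  - apply is_lim_mult_finite; [apply is_lim_const|]. apply is_lim_minus'.
    + apply is_lim_mult_finite; [|exact Hq].
      apply is_lim_mult_finite; [exact HK | apply is_lim_div_ln_p].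
    + apply is_lim_mult_finite; [|exact Hq].
      apply is_lim_mult_finite; [apply is_lim_const | apply is_lim_div_ln_sqr_p].
Qed.

Lemma h1_expansion (K : R) :
  is_lim h1 p_infty K ->
  is_lim (fun s => s * (h1 s - K - log_coef ^ 2 / W_slope * ((1 + ln s) / s))
                   + (log_coef / W_slope * K + WZ_coef2 / (k * W_slope ^ 2))) p_infty 0.
Proof.
  intros HK.
  set (c3 := log_coef ^ 2 / W_slope).
  set (M := log_coef / W_slope * K + WZ_coef2 / (k * W_slope ^ 2)).
  set (T := fun s => h1 s - K - c3 * ((1 + ln s) / s) + M / s).
  apply (is_lim_ext_loc (fun s => s * T s)); [exists 0; intros s Hs; unfold T; field; lra|].
  apply (is_lim_mult_id_of_derive T (fun s => dh1 s + c3 * (ln s / s ^ 2) - M / s ^ 2) 1).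
  - intros s Hs. unfold T. auto_derive; [split; [exists (dh1 s); apply is_derive_h1; lra | lra]|].
    change (Derive (fun x => h1 x)) with (Derive h1).
    rewrite (is_derive_unique h1 s _ (is_derive_h1 s ltac:(lra))). field. lra.
  - apply (is_lim_ext_loc (fun s => (h1 s - K) - c3 * (/ s + ln s / s) + M * / s));
      [exists 0; intros s Hs; unfold T; field; lra|].
    replace 0 with ((K - K) - c3 * (0 + 0) + M * 0) by ring.
    apply is_lim_plus'; [apply is_lim_minus'|].
    + apply is_lim_minus'; [exact HK | apply is_lim_const].
    + apply is_lim_mult_finite; [apply is_lim_const|].
      apply is_lim_plus'; [apply is_lim_inv_id_p | apply is_lim_div_ln_p].
    + apply is_lim_mult_finite; [apply is_lim_const | apply is_lim_inv_id_p].
  - apply (is_lim_ext_loc (fun s => (s ^ 2 * dh1 s + c3 * ln s) - M));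
      [exists 0; intros s Hs; field; lra|].
    replace 0 with (M - M) by ring.
    apply is_lim_minus'; [exact (sqr_mul_dh1_limit K HK) | apply is_lim_const].
Qed.

End AutonomousSystem.

(** * The radial profile *)

Definition rad_k (m : R) : R := m / (1 - m).
Definition rad_b (n : nat) (beta : R) : R := beta / (INR n - 1).
Definition rad_alpha (n : nat) (m : R) : R := 2 * rad_k m * (INR n - 2 - 2 * rad_k m).
Definition rad_gamma (n : nat) (m : R) : R := 2 - INR n + 4 * rad_k m.

(* With [u = v^m] and [r = e^s], [z_fun m u = rad_k m * w' / w] for [w = w_fun m v]. *)
Definition z_fun (m : R) (u : R -> R) (s : R) : R :=
  2 * rad_k m + exp s * Derive u (exp s) / u (exp s).

Lemma is_derive_Rpower_comp (v : R -> R) (m r : R) :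
  0 < v r -> ex_derive v r ->
  is_derive (fun t => Rpower (v t) m) r (m * Rpower (v r) m * Derive v r / v r).
Proof.
  intros Hv Dv. unfold Rpower. auto_derive; [split; [exact Dv | split; [exact Hv | easy]]|].
  change (Derive (fun x => v x)) with (Derive v). field. lra.
Qed.

Section RadialSystem.

Variables (n : nat) (m beta : R) (v u : R -> R).
Hypothesis m_bounds : 0 < m < 1.
Hypothesis n_gt_1 : 1 < INR n.
Hypothesis v_pos : forall r, 0 < r -> 0 < v r.
Hypothesis u_def : forall r, 0 < r -> u r = Rpower (v r) m.
Hypothesis v_u_derivable :
  forall r, 0 < r -> ex_derive v r /\ ex_derive u r /\ ex_derive (Derive u) r.
Hypothesis Derive_u : forall r, 0 < r -> Derive u r = m * u r * Derive v r / v r.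
Hypothesis radial_ode : forall r, 0 < r ->
  (INR n - 1) / m * (Derive (Derive u) r + (INR n - 1) / r * Derive u r)
  + 2 * beta / (1 - m) * v r + beta * r * Derive v r = 0.

Lemma is_derive_w_fun (s : R) :
  is_derive (w_fun m v) s (w_fun m v s * z_fun m u s / rad_k m).
Proof.
  assert (Hr : 0 < exp s) by apply exp_pos.
  destruct (v_u_derivable _ Hr) as [Dv _]. assert (Hv := v_pos _ Hr).
  assert (Hu : 0 < u (exp s)) by (rewrite u_def by exact Hr; apply exp_pos).
  unfold w_fun, Rpower. auto_derive; [split; [exact Dv | split; [exact Hv | easy]]|].
  change (Derive (fun x => v x)) with (Derive v).
  unfold z_fun, rad_k. rewrite (Derive_u _ Hr). field. repeat split; lra.
Qed.

Lemma is_derive_z_fun (s : R) :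
  is_derive (z_fun m u) s
    (rad_alpha n m + rad_gamma n m * z_fun m u s - z_fun m u s ^ 2
     - rad_b n beta * w_fun m v s * z_fun m u s).
Proof.
  assert (Hr : 0 < exp s) by apply exp_pos.
  destruct (v_u_derivable _ Hr) as [Dv [Du DDu]]. assert (Hv := v_pos _ Hr).
  assert (Hu : u (exp s) = exp (m * ln (v (exp s)))) by (apply u_def, Hr).
  assert (Hupos : 0 < u (exp s)) by (rewrite Hu; apply exp_pos).
  unfold z_fun. auto_derive; [repeat split; auto; lra|].
  change (Derive (fun x => Derive u x)) with (Derive (Derive u)).
  change (Derive (fun x => u x)) with (Derive u).
  assert (HD2 : Derive (Derive u) (exp s) = - (INR n - 1) / exp s * Derive u (exp s)
     - m / (INR n - 1) * (2 * beta / (1 - m) * v (exp s) + beta * exp s * Derive v (exp s))).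
  { apply Rminus_diag_uniq. rewrite <- (Rmult_0_r (m / (INR n - 1))), <- (radial_ode _ Hr).
    field. repeat split; lra. }
  assert (Hw : w_fun m v s = exp s * exp s * (v (exp s) / u (exp s))).
  { unfold w_fun, Rpower. rewrite Hu.
    replace (2 * s) with (s + s) by ring. rewrite exp_plus. f_equal.
    rewrite <- (exp_ln (v (exp s))) at 2 by exact Hv.
    unfold Rdiv. rewrite <- exp_Ropp, <- exp_plus. f_equal. ring. }
  rewrite HD2, Hw, (Derive_u _ Hr).
  unfold rad_alpha, rad_gamma, rad_b, rad_k. field. repeat split; lra.
Qed.

End RadialSystem.

Lemma z_fun_pos_near_origin (m lambda : R) (v : R -> R) :
  0 < m < 1 -> 0 < lambda ->
  filterlim v (at_right 0) (locally lambda) ->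
  filterlim (Derive (fun t => Rpower (v t) m)) (at_right 0) (locally 0) ->
  exists s0, 0 < z_fun m (fun t => Rpower (v t) m) s0.
Proof.
  intros Hm Hlam Hv Hdu.
  set (u := fun t => Rpower (v t) m) in *.
  set (k := rad_k m). assert (Hk : 0 < k) by (apply Rdiv_lt_0_compat; lra).
  set (u0 := Rpower (lambda / 2) m). assert (Hu0 : 0 < u0) by apply exp_pos.
  assert (Hnear : at_right 0 (fun r => (0 < r /\ r < k * u0)
                                       /\ (lambda / 2 < v r /\ Rabs (Derive u r) < 1))).
  { apply filter_and; [|apply filter_and].
    - exists (mkposreal (k * u0) (Rmult_lt_0_compat _ _ Hk Hu0)). intros r Hr Hr0.
      split; [exact Hr0|]. apply Rabs_lt_between' in Hr. cbn [pos] in Hr. lra.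
    - apply Hv. exists (mkposreal (lambda / 2) ltac:(lra)). intros y Hy.
      apply Rabs_lt_between' in Hy. cbn [pos] in Hy. lra.
    - apply (Hdu (fun y => Rabs y < 1)). exists (mkposreal 1 Rlt_0_1). intros y Hy.
      change (Rabs (y - 0) < 1) in Hy. rewrite Rminus_0_r in Hy. exact Hy. }
  destruct (filter_ex _ Hnear) as [r [[Hr0 Hr] [Hvr Hdur]]].
  exists (ln r). unfold z_fun. fold k. rewrite exp_ln by exact Hr0.
  assert (Hur : u0 < u r) by (apply Rlt_Rpower_l; lra).
  assert (Hq : Rabs (r * Derive u r / u r) < k).
  { unfold Rdiv. rewrite !Rabs_mult, Rabs_right, (Rabs_right (/ u r))
      by (left; try apply Rinv_0_lt_compat; lra).
    apply (Rmult_lt_reg_r (u r)); [lra|]. rewrite Rmult_assoc, Rinv_l, Rmult_1_r by lra.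
    generalize (Rabs_pos (Derive u r)). nra. }
  apply Rabs_lt_between in Hq. lra.
Qed.

Lemma subcritical_exponent_bounds (n : nat) (m : R) :
  (3 <= n)%nat -> 0 < m -> m < (INR n - 2) / INR n ->
  1 < INR n /\ INR n * m < INR n - 2 /\ 0 < m < 1.
Proof.
  intros Hn Hm0 Hm.
  assert (HN : 3 <= INR n) by (apply (le_INR 3) in Hn; simpl in Hn; lra).
  assert (HmN : INR n * m < INR n - 2).
  { apply (Rmult_lt_compat_l (INR n)) in Hm; [|lra].
    replace (INR n * ((INR n - 2) / INR n)) with (INR n - 2) in Hm by (field; lra). exact Hm. }
  split; [lra | split; [exact HmN | split; [lra | nra]]].
Qed.

Section Constants.

Variables (n : nat) (m beta : R) (v : R -> R).
Hypothesis m_bounds : 0 < m < 1.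
Hypothesis n_gt_1 : 1 < INR n.
Hypothesis beta_pos : 0 < beta.
Hypothesis m_subcritical : INR n * m < INR n - 2.

Let k := rad_k m.
Let b := rad_b n beta.
Let alpha := rad_alpha n m.
Let gamma := rad_gamma n m.

Lemma rad_coefs_pos : 0 < k /\ 0 < b /\ 0 < alpha.
Proof.
  assert (Hk : 0 < k) by (apply Rdiv_lt_0_compat; lra).
  split; [exact Hk | split; [apply Rdiv_lt_0_compat; lra|]].
  unfold alpha, rad_alpha. apply Rmult_lt_0_compat; [fold k; lra|]. apply Rlt_0_minus.
  unfold rad_k. apply (Rmult_lt_reg_r (1 - m)); [lra|].
  replace (2 * (m / (1 - m)) * (1 - m)) with (2 * m) by (field; lra). nra.
Qed.

Lemma h1_fun_eq (s : R) : h1_fun n m beta v s = h1 k b alpha gamma (w_fun m v) s.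
Proof.
  unfold h1_fun, h_fun, h1, W_slope, log_coef, k, b, alpha, gamma,
    rad_alpha, rad_gamma, rad_b, rad_k.
  field. repeat split; lra.
Qed.

Lemma s_mul_h2_fun_eq (K s : R) :
  0 < s ->
  s * h2_fun n m beta K v s + (1 - m) * a1 n m beta K / (2 * (INR n - 2 - INR n * m) * beta)
  = s * (h1 k b alpha gamma (w_fun m v) s - K
         - log_coef b gamma ^ 2 / W_slope k b alpha * ((1 + ln s) / s))
    + (log_coef b gamma / W_slope k b alpha * K
       + WZ_coef2 k b alpha gamma / (k * W_slope k b alpha ^ 2)).
Proof.
  intros Hs. unfold h2_fun. rewrite h1_fun_eq.
  assert (INR n - 2 - 2 * (m / (1 - m)) <> 0).
  { intro H. apply (f_equal (fun x => x * (1 - m))) in H.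
    replace ((INR n - 2 - 2 * (m / (1 - m))) * (1 - m)) with (INR n - 2 - INR n * m) in H
      by (field; lra).
    lra. }
  unfold a1, h1, WZ_coef2, W_slope, log_coef, k, b, alpha, gamma,
    rad_alpha, rad_gamma, rad_b, rad_k.
  field. repeat split; lra.
Qed.

End Constants.

Theorem lemma2p8 (n : nat) (m lambda beta : R) (v : R -> R) :
  (3 <= n)%nat ->
  0 < m -> m < (INR n - 2) / INR n -> m <> (INR n - 2) / (INR n + 2) ->
  0 < lambda -> 0 < beta ->
  radial_sol n m beta lambda v ->
  (exists K : R, filterlim (h1_fun n m beta v) (Rbar_locally p_infty) (locally K)) /\
  (forall K : R,
     filterlim (h1_fun n m beta v) (Rbar_locally p_infty) (locally K) ->
     filterlim
       (fun s => s * h2_fun n m beta K v s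
                 + (1 - m) * a1 n m beta K / (2 * (INR n - 2 - INR n * m) * beta))
       (Rbar_locally p_infty) (locally 0)).
Proof.
  intros Hn Hm0 Hm _ Hlam Hbeta [Hv [_ [Hvlim [Hdiff [Hdu0 Hode]]]]].
  destruct (subcritical_exponent_bounds n m Hn Hm0 Hm) as [HN [HmN Hm1]].
  destruct (rad_coefs_pos n m beta Hm1 HN Hbeta HmN) as [Hk [Hb Halpha]].
  set (u := fun t => Rpower (v t) m) in *.
  assert (Hv' : forall r, 0 < r -> 0 < v r) by (intros; apply Hv; lra).
  assert (Hdu : forall r, 0 < r -> Derive u r = m * u r * Derive v r / v r).
  { intros r Hr. apply is_derive_unique, is_derive_Rpower_comp; [apply Hv' | apply Hdiff];
    exact Hr. }
  assert (HW := is_derive_w_fun m v u Hm1 Hv' (fun r _ => eq_refl) Hdiff Hdu).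
  assert (HZ := is_derive_z_fun n m beta v u Hm1 HN Hv' (fun r _ => eq_refl) Hdiff Hdu Hode).
  assert (HWpos : forall s, 0 < w_fun m v s) by (intros; apply Rmult_lt_0_compat; apply exp_pos).
  destruct (z_fun_pos_near_origin m lambda v Hm1 Hlam Hvlim Hdu0) as [s0 Hs0].
  assert (Hh1 := h1_fun_eq n m beta v Hm1 HN Hbeta).
  split.
  - destruct (h1_converges _ _ _ _ s0 _ _ Hk Hb Halpha HWpos HW HZ Hs0) as [K HK].
    exists K. exact (is_lim_ext _ _ p_infty K (fun s => eq_sym (Hh1 s)) HK).
  - intros K HK. eapply (is_lim_ext_loc _ _ p_infty 0); cycle 1.
    + apply (h1_expansion _ _ _ _ s0 _ _ Hk Hb Halpha HWpos HW HZ Hs0).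
      exact (is_lim_ext _ _ p_infty K Hh1 HK).
    + exists 0. intros s Hs. symmetry.
      exact (s_mul_h2_fun_eq n m beta v Hm1 HN Hbeta HmN K s Hs).
Qed.
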